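(* With $G$ and $\widehat\Theta$ as in the context, the column number of $\widehat\Theta$ equals the order of $G$: $c(\widehat\Theta)=|G|$.
   Context: Column number of a substitution $\zeta$ over $\mathbb{B}$: $c(\zeta)=\min_{k\ge1,0\le j<\lambda^k}|\{\zeta^k(b)_j:b\in\mathbb{B}\}|$. Let $\theta:\mathbb{A}\to\mathbb{A}^\lambda$ ($\lambda\ge2$) be primitive (some $\theta^k(a)$ contains all letters for each $a$), injective on letters, with infinite subshift, $c=c(\theta)$. $\mathcal{X}$: sets $M\subset\mathbb{A}$ with $|M|=c$ and $M=\{\theta^k(a)_j:a\in\mathbb{A}\}$ for some $k\ge1$, $j<\lambda^k$; $\widetilde\theta(M)_j:=\{\theta(a)_j:a\in M\}\in\mathcal{X}$, with $a\mapsto\theta(a)_j$ a bijection $M\to\widetilde\theta(M)_j$. Assume (after passing to a power) $a_0\in M_0\in\mathcal{X}$, $\theta(a_0)_0=a_0$, $\widetilde\theta(M_0)_0=M_0$. Fix a total order on $M_0$ with minimum $a_0$ and $k_0\ge1$, $j_0<\lambda^{k_0}$ with $\theta^{k_0}(a)_{j_0}=a$ ($a\in M_0$), $\widetilde\theta^{k_0}(M)_{j_0}=M_0$ ($M\in\mathcal{X}$). Order each $M$ by $a<b$ iff $\theta^{k_0}(a)_{j_0}<\theta^{k_0}(b)_{j_0}$; $e_M(i)$ = $(i+1)$-th smallest element of $M$. $\widetilde\Theta(i,M)_j=(i',\widetilde\theta(M)_j)$ where $\theta(e_M(i))_j=e_{\widetilde\theta(M)_j}(i')$; $\sigma_{M,j}\in\mathcal{S}_c$: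 $\sigma_{M,j}(m)=n$ iff $\widetilde\Theta(n,M)_j=(m,\widetilde\theta(M)_j)$; $G=\langle\sigma_{M,j}:M\in\mathcal{X},j<\lambda\rangle\le\mathcal{S}_c$; $\widehat\Theta(\sigma,M)_j=(\sigma\circ\sigma_{M,j},\widetilde\theta(M)_j)$ on $G\times\mathcal{X}$. *)

From Stdlib Require Import ZArith.
From Stdlib Require List.
From HB Require Import structures.
From mathcomp Require Import all_boot all_order all_fingroup.
Set Implicit Arguments. Unset Strict Implicit. Unset Printing Implicit Defensive.

Section Subst.
Variable T : finType.

(* A substitution is a map s : T -> seq T (constant length is a separate hypothesis).
   s^k(a) is computed on words: s(w) = s(w_0) s(w_1) ... *)
Definition subst_word (s : T -> seq T) (w : seq T) : seq T := flatten (map s w).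
Definition subst_iter (s : T -> seq T) (k : nat) (a : T) : seq T :=
  iter k (subst_word s) [:: a].
Definition sub_letter (s : T -> seq T) (k : nat) (a : T) (j : nat) : T :=
  nth a (subst_iter s k a) j.

Definition colset (s : T -> seq T) (D : {set T}) (k j : nat) : {set T} :=
  [set sub_letter s k b j | b in D].

Definition colval (s : T -> seq T) (lam : nat) (D : {set T}) (n : nat) : Prop :=
  exists k j, 0 < k /\ j < lam ^ k /\ n = #|colset s D k j|.

Definition is_column_number (s : T -> seq T) (lam : nat) (D : {set T}) (c : nat)
  : Prop := colval s lam D c /\ forall n, colval s lam D n -> c <= n.

Definition primitive_subst (s : T -> seq T) : Prop :=
  exists k, 0 < k /\ forall a b, b \in subst_iter s k a.

Definition in_language (s : T -> seq T) (w : seq T) : Prop :=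
  exists k a, infix w (subst_iter s k a).
Definition in_subshift (s : T -> seq T) (x : Z -> T) : Prop :=
  forall (i : Z) (n : nat),
    in_language s [seq x (i + Z.of_nat m)%Z | m <- iota 0 n].
Definition infinite_subshift (s : T -> seq T) : Prop :=
  forall l : list (Z -> T), exists x, in_subshift s x /\
    List.Forall (fun y => exists i, x i <> y i) l.
End Subst.

Section Hat.
Variables (A : finType) (theta : A -> seq A) (lam c : nat).
Variables (k0 j0 : nat) (a0 : A) (ordM0 : seq A).

Definition theta_tilde (M : {set A}) (j : nat) : {set A} :=
  [set sub_letter theta 1 a j | a in M].

(* M ordered by a < b iff theta^{k0}(a)_{j0} < theta^{k0}(b)_{j0} in the order of M0,
   the order on M0 being given by the list ordM0 (increasing). *)
Definition rankM0 (a : A) : nat := index (sub_letter theta k0 a j0) ordM0.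
Definition sortedM (M : {set A}) : seq A :=
  sort (fun a b => rankM0 a <= rankM0 b) (enum M).
Definition e_M (M : {set A}) (i : nat) : A := nth a0 (sortedM M) i.

Definition tau_fun (M : {set A}) (j : nat) (n : 'I_c) : 'I_c :=
  insubd n (index (sub_letter theta 1 (e_M M n) j) (sortedM (theta_tilde M j))).

(* the permutation n |-> i' (identity if the map is not injective, which never
   happens for M in calX) *)
Definition mkperm (T : finType) (f : T -> T) : {perm T} := insubd (1%g : {perm T}) (finfun f).
Definition tau_perm (M : {set A}) (j : nat) : {perm 'I_c} := mkperm (tau_fun M j).

(* sigma_{M,j}(m) = n iff Theta~(n,M)_j = (m, theta~(M)_j) *)
Definition sigma_perm (M : {set A}) (j : nat) : {perm 'I_c} := ((tau_perm M j)^-1)%g.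

Definition G_of (X : {set {set A}}) : {set {perm 'I_c}} :=
  << [set sigma_perm M.1 (nat_of_ord M.2) | M in setX X [set: 'I_lam]] >>%g.

(* Theta^(sigma, M)_j = (sigma o sigma_{M,j}, theta~(M)_j);
   in MathComp (s * t) x = t (s x), so sigma o sigma_{M,j} = sigma_{M,j} * sigma *)
Definition Theta_hat (p : {perm 'I_c} * {set A}) : seq ({perm 'I_c} * {set A}) :=
  mkseq (fun j => ((sigma_perm p.2 j * p.1)%g, theta_tilde p.2 j)) lam.
End Hat.
Arguments Theta_hat {A} theta lam c k0 j0 a0 ordM0 p.

(* Theta^ is a skew product of the substitution M |-> (theta~(M)_j)_j on calX
   with the cocycle (M, j) |-> sigma_{M,j}, whose values lie in G.  A skew
   product commutes with right translations of the group coordinate, so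
   g |-> Theta^^k(g, M)_j is injective and every column has at least |G|
   letters.  Conversely, at the position (k0, j0) every M in calX is sent to
   M0 and every group coordinate stays in G, so that column has at most |G|
   letters.  Only these facts about calX, sigma and (k0, j0) are needed; the
   remaining hypotheses merely make the setting that of the paper. *)
From HB Require Import structures.
From mathcomp Require Import all_boot all_order all_fingroup.
From mathcomp Require Import zify.

Set Implicit Arguments. Unset Strict Implicit. Unset Printing Implicit Defensive.

Lemma subst_iter_map (T T' : finType) (s : T -> seq T) (s' : T' -> seq T')
    (f : T -> T') (s'f : forall a, s' (f a) = map f (s a)) k a :
  subst_iter s' k (f a) = map f (subst_iter s k a).
Proof.
elim: k => [|k IH] //=; rewrite /subst_word -/(subst_iter s' k (f a)) IH.
by elim: (subst_iter s k a) => [|b w IHw] //=; rewrite s'f IHw map_cat.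
Qed.

(* No bound on j is needed: out of range, sub_letter s k a j is the junk value a. *)
Lemma sub_letter_map (T T' : finType) (s : T -> seq T) (s' : T' -> seq T')
    (f : T -> T') (s'f : forall a, s' (f a) = map f (s a)) k a j :
  sub_letter s' k (f a) j = f (sub_letter s k a j).
Proof.
rewrite /sub_letter (subst_iter_map s'f).
by case: (ltnP j (size (subst_iter s k a))) => Hj;
  [rewrite (nth_map a) | rewrite !nth_default ?size_map].
Qed.

Lemma sub_letter_closed (T : finType) (s : T -> seq T) (P : pred T)
    (sP : forall a, P a -> all P (s a)) k a j :
  P a -> P (sub_letter s k a j).
Proof.
move=> Pa; have /allP Pw : all P (subst_iter s k a).
  elim: k => [|k IH] /=; first by rewrite Pa.
  rewrite /subst_word -/(subst_iter s k a).
  elim: (subst_iter s k a) IH => [|b w IHw] //= /andP [/sP Pb /IHw].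
  by rewrite all_cat Pb.
rewrite /sub_letter; case: (ltnP j (size (subst_iter s k a))) => Hj.
  exact/Pw/mem_nth.
by rewrite nth_default.
Qed.

Lemma sub_letter1 (T : finType) (s : T -> seq T) a j :
  sub_letter s 1 a j = nth a (s a) j.
Proof. by rewrite /sub_letter /= /subst_word /= cats0. Qed.

Lemma digit_lt_expS lam k j r : j < lam ^ k -> r < lam -> j * lam + r < lam ^ k.+1.
Proof. by rewrite expnSr; move: (lam ^ k) => p; nia. Qed.

Section ConstantLength.

Variables (T : finType) (s : T -> seq T) (lam : nat).
Hypothesis size_s : forall a, size (s a) = lam.

Lemma size_subst_iter k a : size (subst_iter s k a) = lam ^ k.
Proof.
elim: k => [|k IH] //=; rewrite expnSr -IH /subst_word -/(subst_iter s k a).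
by elim: (subst_iter s k a) => [|b w IHw] //=; rewrite size_cat size_s IHw mulSn.
Qed.

Lemma nth_subst_word d w i r : i < size w -> r < lam ->
  nth d (subst_word s w) (i * lam + r) = nth d (s (nth d w i)) r.
Proof.
elim: w i => [|b w IH] [|i] //= Hi Hr; rewrite /subst_word /= nth_cat size_s.
  by rewrite mul0n add0n Hr.
by rewrite mulSn -addnA ltnNge leq_addr /= addKn IH.
Qed.

Lemma sub_letterS k a i r : i < lam ^ k -> r < lam ->
  sub_letter s k.+1 a (i * lam + r) = sub_letter s 1 (sub_letter s k a i) r.
Proof.
move=> Hi Hr; rewrite sub_letter1 /sub_letter /= nth_subst_word ?size_subst_iter //.
by apply: set_nth_default; rewrite size_s.
Qed.

Lemma colsetS D k j r : j < lam ^ k -> r < lam ->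
  colset s D k.+1 (j * lam + r) = [set sub_letter s 1 a r | a in colset s D k j].
Proof.
by move=> Hj Hr; rewrite -imset_comp; apply: eq_imset => a; rewrite /= sub_letterS.
Qed.

End ConstantLength.

Definition base_subst (U : finType) (lam : nat) (step : U -> nat -> U)
  (u : U) : seq U := mkseq (step u) lam.

Section SetSubstitution.

Variables (T : finType) (s : T -> seq T) (lam : nat).
Hypothesis size_s : forall a, size (s a) = lam.

Lemma sub_letter_set_subst k M j : j < lam ^ k ->
  sub_letter (base_subst lam (theta_tilde s)) k M j =
  [set sub_letter s k a j | a in M].
Proof.
have size_set_subst N : size (base_subst lam (theta_tilde s) N) = lam.
  exact: size_mkseq.
elim: k M j => [|k IH] M j.
  rewrite expn0 ltnS leqn0 => /eqP ->.
  by rewrite /sub_letter /= -[LHS]imset_id.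
have [lam0 | lam_gt0] := posnP lam; first by rewrite lam0 exp0n.
move=> Hj; have Hq : j %/ lam < lam ^ k by rewrite ltn_divLR // -expnSr.
have Hr : j %% lam < lam by rewrite ltn_mod.
rewrite (divn_eq j lam) (sub_letterS size_set_subst) // sub_letter1 nth_mkseq //=.
rewrite IH // /theta_tilde -imset_comp; apply: eq_imset => a.
by rewrite /= (sub_letterS size_s).
Qed.

Variables (c : nat) (X : {set {set T}}).
Hypothesis column_number_c : is_column_number s lam [set: T] c.
Hypothesis X_def : forall M : {set T}, M \in X <->
  (#|M| = c /\ exists k j, 0 < k /\ j < lam ^ k /\ M = colset s [set: T] k j).

Lemma theta_tilde_closed M r : M \in X -> r < lam -> theta_tilde s M r \in X.
Proof.
move=> /X_def [cardM [k [j [k_gt0 [Hj EM]]]]] Hr; subst M.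
have Hjr := digit_lt_expS Hj Hr.
rewrite /theta_tilde -(colsetS size_s) //; apply/X_def.
split; last by exists k.+1, (j * lam + r).
apply/eqP; rewrite eqn_leq; apply/andP; split.
  by rewrite (colsetS size_s) // -cardM leq_imset_card.
by apply: column_number_c.2; exists k.+1, (j * lam + r).
Qed.

End SetSubstitution.

Section SkewProduct.

Variables (gT : finGroupType) (U : finType) (lam : nat).
Variables (step : U -> nat -> U) (cocycle : U -> nat -> gT).

Definition skew_subst (p : gT * U) : seq (gT * U) :=
  mkseq (fun j => ((cocycle p.2 j * p.1)%g, step p.2 j)) lam.

Lemma sub_letter_skew_snd k p j :
  (sub_letter skew_subst k p j).2 = sub_letter (base_subst lam step) k p.2 j.
Proof.
rewrite -(sub_letter_map (s' := base_subst lam step) (f := snd)) // => q.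
by rewrite -map_comp.
Qed.

Lemma sub_letter_skew_mulg k g u j :
  sub_letter skew_subst k (g, u) j =
  (((sub_letter skew_subst k (1%g, u) j).1 * g)%g,
   (sub_letter skew_subst k (1%g, u) j).2).
Proof.
rewrite -(sub_letter_map (s' := skew_subst)
             (f := fun q => ((q.1 * g)%g, q.2))) ?mul1g // => q.
by rewrite -map_comp; apply: eq_map => i /=; rewrite mulgA.
Qed.

Variables (H : {group gT}) (X : {set U}) (k0 j0 : nat) (u0 : U).
Hypothesis step_closed : forall u j, u \in X -> j < lam -> step u j \in X.
Hypothesis cocycle_in : forall u j, u \in X -> j < lam -> cocycle u j \in H.
Hypotheses (k0_gt0 : 0 < k0) (j0_lt : j0 < lam ^ k0) (u0_in : u0 \in X).
Hypothesis synchronizing :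
  forall u, u \in X -> sub_letter (base_subst lam step) k0 u j0 = u0.

Lemma sub_letter_skew_in k p j :
  p \in setX H X -> sub_letter skew_subst k p j \in setX H X.
Proof.
apply: sub_letter_closed => -[g u] /setXP [/= gH uX].
apply/allP => q /mapP [i]; rewrite mem_iota => /andP [_ Hi] ->.
by apply/setXP; rewrite groupM ?step_closed ?cocycle_in.
Qed.

Lemma card_skew_colset_ge k j : #|H| <= #|colset skew_subst (setX H X) k j|.
Proof.
have inj : injective (fun g => sub_letter skew_subst k (g, u0) j).
  move=> g1 g2 /=.
  by rewrite (sub_letter_skew_mulg k g1) (sub_letter_skew_mulg k g2) => -[/mulgI].
rewrite -(card_imset H inj); apply/subset_leq_card/subsetP => _ /imsetP [g gH ->].
by apply/imsetP; exists (g, u0); rewrite ?inE ?gH.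
Qed.

Lemma skew_colset_sync :
  colset skew_subst (setX H X) k0 j0 \subset setX H [set u0].
Proof.
apply/subsetP => _ /imsetP [[g u] guHX ->].
have /[dup] /(sub_letter_skew_in k0 j0) := guHX.
rewrite !inE => /andP [gH _] /andP [_ uX].
by rewrite gH /= sub_letter_skew_snd synchronizing.
Qed.

Theorem skew_is_column_number : is_column_number skew_subst lam (setX H X) #|H|.
Proof.
split; last by move=> _ [k [j [_ [_ ->]]]]; apply: card_skew_colset_ge.
exists k0, j0; do 2!split=> //; apply/eqP; rewrite eqn_leq card_skew_colset_ge.
by rewrite -[#|H|]muln1 -(cards1 u0) -cardsX subset_leq_card ?skew_colset_sync.
Qed.

End SkewProduct.

Theorem mainTheorem18 (A : finType) (theta : A -> seq A) (lam c : nat)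
  (X : {set {set A}}) (a0 : A) (M0 : {set A}) (ordM0 : seq A) (k0 j0 : nat)
  (Hlam : 2 <= lam)
  (Hsize : forall a, size (theta a) = lam)
  (Hprim : primitive_subst theta)
  (Hinj : injective theta)
  (Hinf : infinite_subshift theta)
  (Hc : is_column_number theta lam [set: A] c)
  (HX : forall M : {set A}, M \in X <->
          (#|M| = c /\ exists k j, 0 < k /\ j < lam ^ k /\ M = colset theta [set: A] k j))
  (Ha0M0 : a0 \in M0) (HM0 : M0 \in X)
  (Ha0fix : sub_letter theta 1 a0 0 = a0)
  (HM0fix : theta_tilde theta M0 0 = M0)
  (Hord : perm_eq ordM0 (enum M0)) (Hordmin : head a0 ordM0 = a0)
  (Hk0 : 0 < k0) (Hj0 : j0 < lam ^ k0)
  (Hk0fix : forall a, a \in M0 -> sub_letter theta k0 a j0 = a)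
  (Hk0X : forall M, M \in X -> [set sub_letter theta k0 a j0 | a in M] = M0) :
  is_column_number (Theta_hat theta lam c k0 j0 a0 ordM0) lam
    (setX (G_of theta lam c k0 j0 a0 ordM0 X) X)
    #|G_of theta lam c k0 j0 a0 ordM0 X|.
Proof.
apply: (skew_is_column_number (H := <<_>>%G) (k0 := k0) (j0 := j0) (u0 := M0))
  => //.
- by move=> M j MX Hj; apply: (theta_tilde_closed Hsize Hc HX).
- move=> M j MX Hj; apply/mem_gen/imsetP; exists (M, Ordinal Hj) => //.
  by rewrite inE MX inE.
- by move=> M MX; rewrite sub_letter_set_subst ?Hk0X.
Qed.
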